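(* Let $K$ be a field of characteristic different from $2$, let $K^{\mathrm{sep}}$ be a separable closure of $K$ with $G_K=\mathrm{Gal}(K^{\mathrm{sep}}/K)$, and let $E/K$ be an elliptic curve. The following statements are equivalent: (1) $E$ is a Legendre elliptic curve over $K$; (2) $E$ can be given (over $K$) by an equation $y^2=(x-a)(x-b)(x-c)$ with $a,b,c\in K$, in which at least one of $\pm(a-b),\pm(b-c),\pm(c-a)$ is a square in $K^*$; (3) all points of order $2$ on $E$ are $K$-rational, and there exists a point $P\in E(K^{\mathrm{sep}})[4]$ such that $-P$ is not in the $G_K$-orbit of $P$.
   Context: An elliptic curve $E/K$ (with $\mathrm{char}\,K\neq 2$) is called a Legendre elliptic curve over $K$ if there exists $\lambda\in K$, $\lambda\neq 0,1$, such that $E$ is isomorphic over $K$ to the curve $E_\lambda: y^2=x(x-1)(x-\lambda)$. *)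

From HB Require Import structures.
From mathcomp Require Import all_boot all_order all_algebra all_field.
Set Implicit Arguments. Unset Strict Implicit. Unset Printing Implicit Defensive.
Import GRing.Theory.
Local Open Scope ring_scope.

(* Long Weierstrass equation  y^2 + a1 xy + a3 y = x^3 + a2 x^2 + a4 x + a6 *)
Record wcoef (F : Type) := WCoef { wa1 : F; wa2 : F; wa3 : F; wa4 : F; wa6 : F }.

Definition wmap (F G : Type) (f : F -> G) (E : wcoef F) : wcoef G :=
  WCoef (f (wa1 E)) (f (wa2 E)) (f (wa3 E)) (f (wa4 E)) (f (wa6 E)).

Section Weierstrass.
Variable F : fieldType.
Implicit Types (E : wcoef F).

Definition wb2 E := wa1 E ^+ 2 + 4 * wa2 E.
Definition wb4 E := 2 * wa4 E + wa1 E * wa3 E.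
Definition wb6 E := wa3 E ^+ 2 + 4 * wa6 E.
Definition wb8 E := wa1 E ^+ 2 * wa6 E + 4 * wa2 E * wa6 E - wa1 E * wa3 E * wa4 E
  + wa2 E * wa3 E ^+ 2 - wa4 E ^+ 2.
Definition wdisc E := - wb2 E ^+ 2 * wb8 E - 8 * wb4 E ^+ 3 - 27 * wb6 E ^+ 2
  + 9 * wb2 E * wb4 E * wb6 E.

Definition elliptic E := wdisc E != 0.

(* projective points: None is the point at infinity O *)
Definition wpoint := option (F * F).

Definition on_curve E (P : wpoint) : bool :=
  match P with
  | None => true
  | Some (x, y) => y ^+ 2 + wa1 E * x * y + wa3 E * y ==
                   x ^+ 3 + wa2 E * x ^+ 2 + wa4 E * x + wa6 E
  end.

Definition wneg E (P : wpoint) : wpoint :=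
  match P with
  | None => None
  | Some (x, y) => Some (x, - y - wa1 E * x - wa3 E)
  end.

(* chord-tangent group law (Silverman, Alg. III.2.3) *)
Definition wadd E (P Q : wpoint) : wpoint :=
  match P, Q with
  | None, _ => Q
  | _, None => P
  | Some (x1, y1), Some (x2, y2) =>
    if (x1 == x2) && (y1 + y2 + wa1 E * x2 + wa3 E == 0) then None else
    let: (l, n) :=
      if x1 != x2 then ((y2 - y1) / (x2 - x1), (y1 * x2 - y2 * x1) / (x2 - x1))
      else ((3 * x1 ^+ 2 + 2 * wa2 E * x1 + wa4 E - wa1 E * y1)
              / (2 * y1 + wa1 E * x1 + wa3 E),
            (- x1 ^+ 3 + wa4 E * x1 + 2 * wa6 E - wa3 E * y1)
              / (2 * y1 + wa1 E * x1 + wa3 E)) in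
    let x3 := l ^+ 2 + wa1 E * l - wa2 E - x1 - x2 in
    Some (x3, - (l + wa1 E) * x3 - n - wa3 E)
  end.

Definition wmul E (n : nat) (P : wpoint) : wpoint := iter n (wadd E P) None.

(* E' is obtained from E by an admissible change of variables over F
   x = u^2 x' + r, y = u^3 y' + s u^2 x' + t  (Silverman III.1, Table 3.1);
   these are exactly the isomorphisms over F of Weierstrass models (III.3.1b). *)
Definition wiso E E' : Prop :=
  exists u r s t : F, u != 0 /\ [/\
    u * wa1 E' = wa1 E + 2 * s,
    u ^+ 2 * wa2 E' = wa2 E - s * wa1 E + 3 * r - s ^+ 2,
    u ^+ 3 * wa3 E' = wa3 E + r * wa1 E + 2 * t,
    u ^+ 4 * wa4 E' = wa4 E - s * wa3 E + 2 * r * wa2 E - (t + r * s) * wa1 E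
                      + 3 * r ^+ 2 - 2 * s * t &
    u ^+ 6 * wa6 E' = wa6 E + r * wa4 E + r ^+ 2 * wa2 E + r ^+ 3 - t * wa3 E
                      - t ^+ 2 - r * t * wa1 E].

(* y^2 = (x-a)(x-b)(x-c) *)
Definition wcubic (a b c : F) : wcoef F :=
  WCoef 0 (- (a + b + c)) 0 (a * b + b * c + c * a) (- (a * b * c)).

Definition wlegendre (l : F) : wcoef F := wcubic 0 1 l.

Definition is_nz_square (d : F) : Prop := exists t : F, t != 0 /\ t ^+ 2 = d.

End Weierstrass.

Definition legendre_curve (K : fieldType) (E : wcoef K) : Prop :=
  exists l : K, [/\ l != 0, l != 1 & wiso E (wlegendre l)].

Definition cubic_square_model (K : fieldType) (E : wcoef K) : Prop :=
  exists a b c : K, wiso E (wcubic a b c) /\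
    (is_nz_square (a - b) \/ is_nz_square (b - a) \/ is_nz_square (b - c) \/
     is_nz_square (c - b) \/ is_nz_square (c - a) \/ is_nz_square (a - c)).

Definition is_sep_closure (K L : fieldType) (iota : {rmorphism K -> L}) : Prop :=
  (forall x : L, exists p : {poly K},
      [/\ p != 0, separable_poly p & root (map_poly iota p) x]) /\
  (forall p : {poly L}, separable_poly p -> (1 < size p)%N -> exists x, root p x).

Definition in_GK (K L : fieldType) (iota : {rmorphism K -> L})
  (sigma : {rmorphism L -> L}) : Prop :=
  bijective sigma /\ forall a : K, sigma (iota a) = iota a.

Definition point_map (F G : Type) (f : F -> G) (P : option (F * F)) : option (G * G) :=
  match P with None => None | Some (x, y) => Some (f x, f y) end.

Definition cond3 (K L : fieldType) (iota : {rmorphism K -> L}) (E : wcoef K) : Prop :=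
  let EL := wmap iota E in
  (forall P : wpoint L, on_curve EL P -> P != None -> wadd EL P P = None ->
     exists Q : wpoint K, on_curve E Q /\ P = point_map iota Q) /\
  (exists P : wpoint L, [/\ on_curve EL P, wmul EL 4 P = None &
     ~ exists sigma : {rmorphism L -> L},
         in_GK iota sigma /\ point_map sigma P = wneg EL P]).

(* Over a separable closure, the 2-torsion of y^2 = (x-a)(x-b)(x-c) is (a,0), (b,0),
   (c,0), and a point P = (x,y) with 2P = (a,0) satisfies (x-a)^2 = (a-b)(a-c), hence
   y^2 = (a-b)(a-c)((a-b) + (a-c) + 2(x-a)).
   (1) <-> (2): if a - b = t^2, then x = t^2 x' + b turns the cubic model into the
   Legendre curve with lambda = (c-b)/t^2.
   (1) -> (3): on y^2 = x(x-1)(x-lambda), with beta^2 = 1 - lambda, the point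
   P = (1+beta, beta(1+beta)) has 2P = (1,0); a sigma with sigma P = -P would fix beta,
   hence also the nonzero y-coordinate of P, which it negates.
   (3) -> (1): completing the square, and using that the 2-torsion is rational, E has a
   model y^2 = (x-e1)(x-e2)(x-e3) over K, and the given P of order 4 has 2P = (e1,0)
   for a suitable labelling.  If neither e1-e2 nor e1-e3 is a square in K, then y is
   not in K(x) although y^2 is, so the K(x)-automorphism y |-> -y of K(x,y) extends
   (by Zorn's lemma) to some sigma in G_K with sigma P = -P. *)

From HB Require Import structures.
From mathcomp Require Import all_boot all_order all_algebra all_field.
From mathcomp Require Import boolp classical_sets.
From mathcomp Require Import ring.
Set Implicit Arguments. Unset Strict Implicit. Unset Printing Implicit Defensive.
Import GRing.Theory.
Local Open Scope ring_scope.

(** * Changes of variables and the chord-tangent law *)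

Record wchg (F : Type) := WChg { chu : F; chr : F; chs : F; cht : F }.

Definition wchg_map (F G : Type) (f : F -> G) (c : wchg F) : wchg G :=
  WChg (f (chu c)) (f (chr c)) (f (chs c)) (f (cht c)).

Section ChangeOfVariables.
Variable F : fieldType.
Implicit Types (E : wcoef F) (c : wchg F) (P : wpoint F).

Definition wchange E E' c : Prop :=
  let: WChg u r s t := c in [/\
    u * wa1 E' = wa1 E + 2 * s,
    u ^+ 2 * wa2 E' = wa2 E - s * wa1 E + 3 * r - s ^+ 2,
    u ^+ 3 * wa3 E' = wa3 E + r * wa1 E + 2 * t,
    u ^+ 4 * wa4 E' = wa4 E - s * wa3 E + 2 * r * wa2 E - (t + r * s) * wa1 E
                      + 3 * r ^+ 2 - 2 * s * t &
    u ^+ 6 * wa6 E' = wa6 E + r * wa4 E + r ^+ 2 * wa2 E + r ^+ 3 - t * wa3 E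
                      - t ^+ 2 - r * t * wa1 E].

Lemma wisoE E E' : wiso E E' <-> exists2 c, chu c != 0 & wchange E E' c.
Proof.
split=> [[u [r [s [t [hu h]]]]]|[[u r s t] hu h]]; first by exists (WChg u r s t).
by exists u, r, s, t.
Qed.

Definition wchange_src c E' : wcoef F :=
  let: WChg u r s t := c in
  let a1 := u * wa1 E' - 2 * s in
  let a2 := u ^+ 2 * wa2 E' + s * a1 - 3 * r + s ^+ 2 in
  let a3 := u ^+ 3 * wa3 E' - r * a1 - 2 * t in
  let a4 := u ^+ 4 * wa4 E' + s * a3 - 2 * r * a2 + (t + r * s) * a1
            - 3 * r ^+ 2 + 2 * s * t in
  let a6 := u ^+ 6 * wa6 E' - r * a4 - r ^+ 2 * a2 - r ^+ 3 + t * a3 + t ^+ 2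
            + r * t * a1 in
  WCoef a1 a2 a3 a4 a6.

Lemma wchangeE E E' c : wchange E E' c -> E = wchange_src c E'.
Proof.
case: c E E' => u r s t [a1 a2 a3 a4 a6] [b1 b2 b3 b4 b6] /= [h1 h2 h3 h4 h6].
have e1 : a1 = u * b1 - 2 * s by rewrite h1; ring.
subst a1.
have e2 : a2 = u ^+ 2 * b2 + s * (u * b1 - 2 * s) - 3 * r + s ^+ 2 by rewrite h2; ring.
subst a2.
have e3 : a3 = u ^+ 3 * b3 - r * (u * b1 - 2 * s) - 2 * t by rewrite h3; ring.
subst a3.
have e4 : a4 = u ^+ 4 * b4 + s * (u ^+ 3 * b3 - r * (u * b1 - 2 * s) - 2 * t)
    - 2 * r * (u ^+ 2 * b2 + s * (u * b1 - 2 * s) - 3 * r + s ^+ 2)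
    + (t + r * s) * (u * b1 - 2 * s) - 3 * r ^+ 2 + 2 * s * t by rewrite h4; ring.
subst a4.
by congr WCoef; rewrite h6; ring.
Qed.

Lemma wdisc_change E E' c : wchange E E' c -> wdisc E = chu c ^+ 12 * wdisc E'.
Proof.
move=> /wchangeE ->; case: c E' => u r s t [b1 b2 b3 b4 b6].
by rewrite /wdisc /wb2 /wb4 /wb6 /wb8 /=; ring.
Qed.

Lemma elliptic_wiso E E' : wiso E E' -> elliptic E -> elliptic E'.
Proof.
move=> /wisoE [c _ h]; rewrite /elliptic (wdisc_change h).
by apply: contraNneq => ->; rewrite mulr0.
Qed.

Definition wchg_inv c : wchg F :=
  let: WChg u r s t := c in WChg u^-1 (- r / u ^+ 2) (- s / u) ((r * s - t) / u ^+ 3).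

Definition wchg_comp c c' : wchg F :=
  let: WChg u r s t := c in let: WChg u' r' s' t' := c' in
  WChg (u * u') (u ^+ 2 * r' + r) (u * s' + s) (u ^+ 3 * t' + s * u ^+ 2 * r' + t).

Lemma wchange_inv E E' c : chu c != 0 -> wchange E E' c -> wchange E' E (wchg_inv c).
Proof.
move=> hu /wchangeE ->; case: c hu E' => u r s t /= hu [b1 b2 b3 b4 b6].
by split; field.
Qed.

Lemma wchange_comp E E' E'' c c' :
  wchange E E' c -> wchange E' E'' c' -> wchange E E'' (wchg_comp c c').
Proof.
move=> /wchangeE -> /wchangeE ->.
by case: c c' E'' => u r s t [u' r' s' t'] [b1 b2 b3 b4 b6] /=; split; ring.
Qed.

Lemma wiso_refl E : wiso E E.
Proof.
apply/wisoE; exists (WChg 1 0 0 0); first exact: oner_neq0.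
by case: E => a1 a2 a3 a4 a6; split; ring.
Qed.

Lemma wiso_sym E E' : wiso E E' -> wiso E' E.
Proof.
move=> /wisoE [c hu h]; apply/wisoE; exists (wchg_inv c); last exact: wchange_inv.
by case: c {h} hu => u r s t; rewrite /= invr_eq0.
Qed.

Lemma wiso_trans E E' E'' : wiso E E' -> wiso E' E'' -> wiso E E''.
Proof.
move=> /wisoE [c hu h] /wisoE [c' hu' h']; apply/wisoE.
exists (wchg_comp c c'); last exact: wchange_comp h h'.
by case: c c' {h h'} hu hu' => u r s t [u' r' s' t'] /= hu hu'; rewrite mulf_neq0.
Qed.

Definition wchange_pt c P : wpoint F :=
  match P with
  | None => None
  | Some (x, y) =>
      let: WChg u r s t := c in Some (u ^+ 2 * x + r, u ^+ 3 * y + s * u ^+ 2 * x + t)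
  end.

Lemma wchange_ptK c : chu c != 0 -> cancel (wchange_pt c) (wchange_pt (wchg_inv c)).
Proof.
by case: c => u r s t /= hu [[x y]|] //=; congr (Some (_, _)); field.
Qed.

Lemma wchange_ptVK c : chu c != 0 -> cancel (wchange_pt (wchg_inv c)) (wchange_pt c).
Proof.
by case: c => u r s t /= hu [[x y]|] //=; congr (Some (_, _)); field.
Qed.

Lemma wchange_pt_eq0 c P : (wchange_pt c P == None) = (P == None).
Proof. by case: P => [[x y]|] //; case: c. Qed.

Definition wpoly E (x y : F) : F := y ^+ 2 + wa1 E * x * y + wa3 E * y -
  (x ^+ 3 + wa2 E * x ^+ 2 + wa4 E * x + wa6 E).

Lemma on_curve_Some E x y : on_curve E (Some (x, y)) = (wpoly E x y == 0).
Proof. by rewrite /= /wpoly subr_eq0. Qed.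

Lemma on_curve_change E E' c P : chu c != 0 -> wchange E E' c ->
  on_curve E (wchange_pt c P) = on_curve E' P.
Proof.
move=> hu /wchangeE ->; case: P => [[x y]|] //; case: c hu => u r s t hu.
rewrite [wchange_pt _ _]/= !on_curve_Some.
have -> : wpoly (wchange_src (WChg u r s t) E') (u ^+ 2 * x + r)
    (u ^+ 3 * y + s * u ^+ 2 * x + t) = u ^+ 6 * wpoly E' x y.
  by rewrite /wpoly /=; ring.
by rewrite mulf_eq0 expf_eq0 (negbTE hu).
Qed.

Lemma wneg_change E E' c P : wchange E E' c ->
  wchange_pt c (wneg E' P) = wneg E (wchange_pt c P).
Proof.
move=> /wchangeE ->; case: P => [[x y]|] //; case: c => u r s t /=.
by congr (Some (_, _)); ring.
Qed.

End ChangeOfVariables.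

Section ChordTangent.
Variable F : fieldType.
Implicit Types (E : wcoef F) (c : wchg F) (P Q : wpoint F).

Definition wslope E (x1 y1 x2 y2 : F) :=
  if x1 != x2 then (y2 - y1) / (x2 - x1)
  else (3 * x1 ^+ 2 + 2 * wa2 E * x1 + wa4 E - wa1 E * y1)
        / (2 * y1 + wa1 E * x1 + wa3 E).
Definition wsum_x E (l x1 x2 : F) := l ^+ 2 + wa1 E * l - wa2 E - x1 - x2.
Definition wsum_y E (l x1 y1 x3 : F) := - (l + wa1 E) * x3 - (y1 - l * x1) - wa3 E.

Lemma wpoly_neg E x y : wpoly E x (- y - wa1 E * x - wa3 E) = wpoly E x y.
Proof. by rewrite /wpoly; ring. Qed.

Lemma wpoly_same_x E x y1 y2 : wpoly E x y1 = 0 -> wpoly E x y2 = 0 ->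
  y1 + y2 + wa1 E * x + wa3 E != 0 -> y2 = y1.
Proof.
move=> h1 h2 hn; apply/eqP; rewrite -subr_eq0.
have : (y2 - y1) * (y1 + y2 + wa1 E * x + wa3 E) = wpoly E x y2 - wpoly E x y1.
  by rewrite /wpoly; ring.
by rewrite h1 h2 subrr => /eqP; rewrite mulf_eq0 (negbTE hn) orbF.
Qed.

Lemma waddE E x1 y1 x2 y2 :
  on_curve E (Some (x1, y1)) -> on_curve E (Some (x2, y2)) ->
  wadd E (Some (x1, y1)) (Some (x2, y2)) =
  if (x1 == x2) && (y1 + y2 + wa1 E * x2 + wa3 E == 0) then None
  else Some (wsum_x E (wslope E x1 y1 x2 y2) x1 x2,
             wsum_y E (wslope E x1 y1 x2 y2) x1 y1 (wsum_x E (wslope E x1 y1 x2 y2) x1 x2)).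
Proof.
rewrite !on_curve_Some => /eqP c1 /eqP c2; rewrite /wadd; case: ifP => // hc.
case: (eqVneq x1 x2) => [ex | nx]; last first.
  rewrite /= /wslope nx /wsum_x /wsum_y; congr (Some (_, _)).
  by field; rewrite subr_eq0 eq_sym.
subst x2; move: hc; rewrite eqxx /= => /negbT hc.
have ey := wpoly_same_x c1 c2 hc; subst y2.
rewrite /wslope eqxx /=.
set D := 2 * y1 + wa1 E * x1 + wa3 E.
have hD : D != 0 by rewrite /D; move: hc; congr (~~ (_ == _)); ring.
set num := 3 * x1 ^+ 2 + 2 * wa2 E * x1 + wa4 E - wa1 E * y1.
have -> : - x1 ^+ 3 + wa4 E * x1 + 2 * wa6 E - wa3 E * y1 =
    y1 * D - num * x1 - 2 * wpoly E x1 y1 by rewrite /D /num /wpoly; ring.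
by rewrite c1 mulr0 subr0 /wsum_y /wsum_x; congr (Some (_, _)); field.
Qed.

Lemma wpoly_chord E x1 y1 x2 y2 l : wpoly E x1 y1 = 0 -> wpoly E x2 y2 = 0 -> x1 != x2 ->
  l = (y2 - y1) / (x2 - x1) ->
  wpoly E (wsum_x E l x1 x2) (wsum_y E l x1 y1 (wsum_x E l x1 x2)) = 0.
Proof.
move=> c1 c2 hx hl; set x3 := wsum_x E l x1 x2; set nu := y1 - l * x1.
have -> : wsum_y E l x1 y1 x3 = - (l * x3 + nu) - wa1 E * x3 - wa3 E.
  by rewrite /wsum_y /nu; ring.
rewrite wpoly_neg.
pose A1 := 2 * l * nu + wa1 E * nu + wa3 E * l - wa4 E + (x1 * x2 + x2 * x3 + x3 * x1).
pose A0 := nu ^+ 2 + wa3 E * nu - wa6 E - x1 * x2 * x3.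
(* On the line y = l t + nu, wpoly is -(t-x1)(t-x2)(t-x3) up to a linear term in t
   which vanishes at x1 and x2. *)
have hC t : wpoly E t (l * t + nu) = - ((t - x1) * (t - x2) * (t - x3)) + A0 + A1 * t.
  by rewrite /A0 /A1 /nu /x3 /wsum_x /wpoly; ring.
have e1 : A0 + A1 * x1 = 0.
  have := hC x1; rewrite (_ : l * x1 + nu = y1); last by rewrite /nu; ring.
  by move=> e; rewrite -c1 e; ring.
have e2 : A0 + A1 * x2 = 0.
  have := hC x2; rewrite (_ : l * x2 + nu = y2); last first.
    by rewrite /nu hl; field; rewrite subr_eq0 eq_sym.
  by move=> e; rewrite -c2 e; ring.
have eA1 : A1 = 0.
  have : A1 * (x1 - x2) = 0.
    have -> : A1 * (x1 - x2) = (A0 + A1 * x1) - (A0 + A1 * x2) by ring.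
    by rewrite e1 e2 subrr.
  by move/eqP; rewrite mulf_eq0 subr_eq0 (negbTE hx) orbF => /eqP.
by rewrite hC (_ : A0 = 0) ?eA1; [ring | move: e1; rewrite eA1 mul0r addr0].
Qed.

Lemma wpoly_tangent E x1 y1 l : wpoly E x1 y1 = 0 ->
  2 * y1 + wa1 E * x1 + wa3 E != 0 ->
  l = (3 * x1 ^+ 2 + 2 * wa2 E * x1 + wa4 E - wa1 E * y1) / (2 * y1 + wa1 E * x1 + wa3 E) ->
  wpoly E (wsum_x E l x1 x1) (wsum_y E l x1 y1 (wsum_x E l x1 x1)) = 0.
Proof.
move=> c1 hD hl; set x3 := wsum_x E l x1 x1; set nu := y1 - l * x1.
have -> : wsum_y E l x1 y1 x3 = - (l * x3 + nu) - wa1 E * x3 - wa3 E.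
  by rewrite /wsum_y /nu; ring.
rewrite wpoly_neg.
set D := 2 * y1 + wa1 E * x1 + wa3 E in hD hl.
set num := 3 * x1 ^+ 2 + 2 * wa2 E * x1 + wa4 E - wa1 E * y1 in hl.
have hC t : wpoly E t (l * t + nu) =
    - (t - x1) ^+ 2 * (t - x3) + wpoly E x1 y1 + (D * l - num) * (t - x1).
  by rewrite /nu /x3 /wsum_x /wpoly /D /num; ring.
have hz : D * l - num = 0 by rewrite hl; field.
by rewrite hC c1 hz; ring.
Qed.

Lemma on_curve_wadd E P Q : on_curve E P -> on_curve E Q -> on_curve E (wadd E P Q).
Proof.
case: P Q => [[x1 y1]|] [[x2 y2]|] // h1 h2; rewrite waddE //; case: ifP => // hc.
move: h1 h2; rewrite !on_curve_Some => /eqP c1 /eqP c2; apply/eqP.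
case: (eqVneq x1 x2) => [ex | nx]; last by apply: (wpoly_chord c1 c2 nx); rewrite /wslope nx.
subst x2; move: hc; rewrite eqxx /= => /negbT hc.
have ey := wpoly_same_x c1 c2 hc; subst y2.
apply: (wpoly_tangent c1); last by rewrite /wslope eqxx.
by move: hc; congr (~~ (_ == _)); ring.
Qed.

Lemma on_curve_wmul E n P : on_curve E P -> on_curve E (wmul E n P).
Proof. by move=> hP; elim: n => //= n IH; apply: on_curve_wadd. Qed.

Lemma wslope_change E E' (u r s t x1 y1 x2 y2 : F) : u != 0 -> wchange E E' (WChg u r s t) ->
  (x1 == x2) ==> (2 * y1 + wa1 E' * x1 + wa3 E' != 0) ->
  wslope E (u ^+ 2 * x1 + r) (u ^+ 3 * y1 + s * u ^+ 2 * x1 + t)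
           (u ^+ 2 * x2 + r) (u ^+ 3 * y2 + s * u ^+ 2 * x2 + t)
  = u * wslope E' x1 y1 x2 y2 + s.
Proof.
move=> hu /wchangeE ->; rewrite /wslope.
rewrite (inj_eq (addIr r)) (inj_eq (mulfI (expf_neq0 2 hu))).
case: (eqVneq x1 x2) => [<- /= hD | hx _] /=; last first.
  rewrite (_ : u ^+ 2 * x2 + r - _ = u ^+ 2 * (x2 - x1)); last by ring.
  by field; rewrite subr_eq0 eq_sym hx.
set D := (X in _ / X); have -> : D = u ^+ 3 * (2 * y1 + wa1 E' * x1 + wa3 E').
  by rewrite /D /=; ring.
by field; rewrite hu hD.
Qed.

Lemma wadd_change E E' c P Q : chu c != 0 -> wchange E E' c ->
  on_curve E' P -> on_curve E' Q ->
  wchange_pt c (wadd E' P Q) = wadd E (wchange_pt c P) (wchange_pt c Q).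
Proof.
case: c => u r s t hu h; rewrite [chu _]/= in hu.
case: P Q => [[x1 y1]|] [[x2 y2]|] // hP hQ.
have := on_curve_change (Some (x1, y1)) (c := WChg u r s t) hu h.
have := on_curve_change (Some (x2, y2)) (c := WChg u r s t) hu h.
rewrite hP hQ [wchange_pt _ (Some (x1, y1))]/= [wchange_pt _ (Some (x2, y2))]/= => hQ' hP'.
rewrite (waddE hP hQ) (waddE hP' hQ').
rewrite (inj_eq (addIr r)) (inj_eq (mulfI (expf_neq0 2 hu))).
case: (eqVneq x1 x2) => [ex | hx] /=; last first.
  rewrite (wslope_change y2 hu h); last by rewrite (negbTE hx).
  by rewrite (wchangeE h) /wsum_x /wsum_y /=; congr (Some (_, _)); ring.
subst x2; set c' := y1 + y2 + wa1 E' * x1 + wa3 E'.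
have -> : u ^+ 3 * y1 + s * u ^+ 2 * x1 + t + (u ^+ 3 * y2 + s * u ^+ 2 * x1 + t) +
    wa1 E * (u ^+ 2 * x1 + r) + wa3 E = u ^+ 3 * c'.
  by rewrite (wchangeE h) /c' /=; ring.
rewrite mulf_eq0 expf_eq0 (negbTE hu) /=; case: ifP => // /negbT hc.
move: hP hQ; rewrite !on_curve_Some => /eqP c1 /eqP c2.
have ey := wpoly_same_x c1 c2 hc; subst y2.
rewrite (wslope_change y1 hu h); last by move: hc; rewrite eqxx /= /c'; congr (~~ (_ == _)); ring.
by rewrite (wchangeE h) /wsum_x /wsum_y /=; congr (Some (_, _)); ring.
Qed.

Lemma wmul_change E E' c n P : chu c != 0 -> wchange E E' c -> on_curve E' P ->
  wchange_pt c (wmul E' n P) = wmul E n (wchange_pt c P).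
Proof.
move=> hu h hP; elim: n => //= n IH.
by rewrite (wadd_change hu h hP (on_curve_wmul n hP)) IH.
Qed.

End ChordTangent.

Section BaseChange.
Variables (F G : fieldType) (f : {rmorphism F -> G}).

Lemma wmap_cubic a b c : wmap f (wcubic a b c) = wcubic (f a) (f b) (f c).
Proof. by rewrite /wmap /wcubic /= !(rmorphE, rmorphM). Qed.

Lemma wmap_legendre l : wmap f (wlegendre l) = wlegendre (f l).
Proof. by rewrite /wlegendre wmap_cubic rmorph0 rmorph1. Qed.

Lemma wchange_map E E' c :
  wchange E E' c -> wchange (wmap f E) (wmap f E') (wchg_map f c).
Proof.
case: c => u r s t [h1 h2 h3 h4 h6].
by split; [move: h1 | move: h2 | move: h3 | move: h4 | move: h6] => /(congr1 f);
  rewrite !(rmorphE, rmorphM, rmorph_nat).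
Qed.

Lemma point_map_change c P :
  point_map f (wchange_pt c P) = wchange_pt (wchg_map f c) (point_map f P).
Proof. by case: P => [[x y]|] //; case: c => u r s t /=; rewrite !(rmorphE, rmorphM). Qed.

Lemma on_curve_map E P : on_curve (wmap f E) (point_map f P) = on_curve E P.
Proof.
case: P => [[x y]|] //=; rewrite -(inj_eq (fmorph_inj f)).
by rewrite !(rmorphE, rmorphM).
Qed.

End BaseChange.

(** * Cubic and Legendre models *)

Section CubicModels.
Variable F : fieldType.
Implicit Types (a b c x y : F).

Lemma wdisc_cubic a b c : wdisc (wcubic a b c) = 16 * ((a - b) * (b - c) * (c - a)) ^+ 2.
Proof. by rewrite /wdisc /wcubic /wb2 /wb4 /wb6 /wb8 /=; ring. Qed.

Lemma wpoly_cubic a b c x y : wpoly (wcubic a b c) x y = y ^+ 2 - (x - a) * (x - b) * (x - c).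
Proof. by rewrite /wpoly /wcubic /=; ring. Qed.

Lemma elliptic_cubic_uniq a b c : elliptic (wcubic a b c) -> [/\ a != b, b != c & c != a].
Proof.
rewrite /elliptic wdisc_cubic.
by rewrite !mulf_eq0 !negb_or !subr_eq0 => /andP [_ /and3P [/andP [/andP [-> ->] ->] _ _]].
Qed.

Lemma wiso_cubic_legendre a b c t : t != 0 -> a - b = t ^+ 2 ->
  wiso (wcubic a b c) (wlegendre ((c - b) / t ^+ 2)).
Proof.
move=> ht hab; apply/wisoE; exists (WChg t b 0 0) => //.
have ea : a = b + t ^+ 2 by rewrite -hab; ring.
by subst a; rewrite /wlegendre /wcubic /=; split; field.
Qed.

Lemma cubic_square_legendre (E : wcoef F) a b c : elliptic E -> wiso E (wcubic a b c) ->
  is_nz_square (a - b) -> legendre_curve E.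
Proof.
move=> hE hiso [t [ht htab]].
have [hab hbc hca] := elliptic_cubic_uniq (elliptic_wiso hiso hE).
exists ((c - b) / t ^+ 2); split; last first.
- exact: wiso_trans hiso (wiso_cubic_legendre c ht (esym htab)).
- rewrite -subr_eq0 -[1](divff (expf_neq0 2 ht)) -mulrBl mulf_eq0 invr_eq0.
  by rewrite expf_eq0 (negbTE ht) andbF orbF htab opprB addrA subrK subr_eq0.
- by rewrite mulf_eq0 invr_eq0 expf_eq0 (negbTE ht) andbF orbF subr_eq0 eq_sym.
Qed.

Lemma legendre_square_model (E : wcoef F) : legendre_curve E -> cubic_square_model E.
Proof.
move=> [l [_ _ h]]; exists 0, 1, l; split => //; right; left.
by exists 1; rewrite oner_eq0 expr1n subr0.
Qed.

Lemma square_model_legendre (E : wcoef F) :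
  elliptic E -> cubic_square_model E -> legendre_curve E.
Proof.
move=> hE [a [b [c [hiso hs]]]].
have key x y z : wcubic x y z = wcubic a b c -> is_nz_square (x - y) -> legendre_curve E.
  by move=> e; rewrite -e in hiso; exact: cubic_square_legendre hE hiso.
by case: hs => [|[|[|[|[|]]]]];
  [apply: (key a b c) | apply: (key b a c) | apply: (key b c a)
  | apply: (key c b a) | apply: (key c a b) | apply: (key a c b)];
  rewrite /wcubic; congr WCoef; ring.
Qed.

End CubicModels.

Section ShortModel.
Variable F : fieldType.
Hypothesis two_neq0 : (2 : F) != 0.

Definition wshort (E : wcoef F) := WCoef 0 (wb2 E / 4) 0 (wb4 E / 2) (wb6 E / 4).

Lemma wiso_short E : wiso E (wshort E).
Proof.
have four_neq0 : (4 : F) != 0 by rewrite (_ : 4 = 2 * 2) ?mulf_neq0 //; ring.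
apply/wisoE; exists (WChg 1 0 (- wa1 E / 2) (- wa3 E / 2)); first exact: oner_neq0.
by rewrite /wshort /wb2 /wb4 /wb6 /=; split; field; rewrite ?two_neq0 ?four_neq0.
Qed.

End ShortModel.

Section Torsion.
Variable F : fieldType.
Hypothesis two_neq0 : (2 : F) != 0.
Implicit Types (E : wcoef F) (P Q : wpoint F) (a b c x y : F).

Lemma addrr_eq0 y : (y + y == 0) = (y == 0).
Proof. by rewrite -mulr2n -mulr_natl mulf_eq0 (negbTE two_neq0). Qed.

Lemma wadd_wneg E P : P != None -> wadd E P (wneg E P) = None.
Proof.
case: P => [[x y]|] // _; rewrite /wadd /= eqxx /=.
by rewrite (_ : y + _ + _ + _ = 0) ?eqxx //; ring.
Qed.

Lemma wadd_eq_None E P Q : on_curve E P -> on_curve E Q -> P != None ->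
  wadd E P Q = None -> Q = wneg E P.
Proof.
case: P Q => [[x1 y1]|] [[x2 y2]|] // hP hQ _; rewrite waddE //.
case: ifP => // /andP [/eqP <- /eqP h] _; congr (Some (_, _)).
by apply/eqP; rewrite -subr_eq0 -h; apply/eqP; ring.
Qed.

Lemma wcubic_two_torsion a b c x y : on_curve (wcubic a b c) (Some (x, y)) ->
  wadd (wcubic a b c) (Some (x, y)) (Some (x, y)) = None ->
  y = 0 /\ [\/ x = a, x = b | x = c].
Proof.
move=> hP /(wadd_eq_None hP hP isT) [].
rewrite /= mul0r !subr0 => /eqP; rewrite -subr_eq0 opprK addrr_eq0 => /eqP y0.
move: hP; rewrite on_curve_Some wpoly_cubic y0 expr0n sub0r oppr_eq0.
by rewrite !mulf_eq0 !subr_eq0 => /orP [/orP [] | ] /eqP; split; constructor.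
Qed.

Lemma wlegendre_four_torsion (be : F) : be != 0 -> 1 + be != 0 ->
  wmul (wlegendre (1 - be ^+ 2)) 4 (Some (1 + be, be * (1 + be))) = None.
Proof.
move=> b0 b1; set E := wlegendre _; set P := Some _.
have hP : on_curve E P by rewrite /P on_curve_Some wpoly_cubic; apply/eqP; ring.
have hT : on_curve E (Some (1, 0)) by rewrite on_curve_Some wpoly_cubic; apply/eqP; ring.
have P2 : wadd E P P = Some (1, 0).
  rewrite /P waddE // eqxx /= /E /wlegendre /wcubic /= mul0r !addr0 addrr_eq0.
  rewrite mulf_eq0 (negbTE b0) (negbTE b1) /= /wslope eqxx /wsum_x /wsum_y /=.
  by congr (Some (_, _)); field; rewrite ?b0 ?b1 ?two_neq0.
have P3 : wadd E P (Some (1, 0)) = wneg E P.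
  have hx : 1 + be != 1 by rewrite -subr_eq0 addrC addKr.
  rewrite /P waddE // (negbTE hx) /= /wslope hx /wsum_x /wsum_y /E /=.
  have hd : 1 - (1 + be) != 0 by rewrite opprD addrA subrr sub0r oppr_eq0.
  by congr (Some (_, _)); field.
by rewrite /wmul !iterS [iter 0 _ _]/= [wadd E P None]/= P2 P3 wadd_wneg.
Qed.

Lemma short_four_torsion E x y : wa1 E = 0 -> wa3 E = 0 ->
  on_curve E (Some (x, y)) -> y != 0 -> wmul E 4 (Some (x, y)) = None ->
  exists x2, wadd E (Some (x, y)) (Some (x, y)) = Some (x2, 0).
Proof.
move=> a1 a3 hP hy h4; set P := Some (x, y) in hP h4 *.
set l := wslope E x y x y; set x2 := wsum_x E l x x; set y2 := wsum_y E l x y x2.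
have P2 : wadd E P P = Some (x2, y2).
  by rewrite /P waddE // eqxx a1 a3 mul0r !addr0 addrr_eq0 (negbTE hy).
have hQ : on_curve E (Some (x2, y2)) by rewrite -P2 on_curve_wadd.
have P3 : wadd E P (Some (x2, y2)) = Some (x, - y).
  rewrite (wadd_eq_None hP (on_curve_wadd hP hQ) isT); first by rewrite /= a1 a3 mul0r !subr0.
  by move: h4; rewrite /wmul !iterS [iter 0 _ _]/= [wadd E P None]/= P2.
exists x2; rewrite P2; congr (Some (_, _)).
move: (hP) (hQ); rewrite !on_curve_Some => /eqP c1 /eqP c2.
have ey2 : y2 = - l * (x2 - x) - y by rewrite /y2 /wsum_y a1 a3; ring.
case: (eqVneq x x2) => [ex | nx].
  rewrite -ex in c2 P2 P3.
  have hc : y + y2 + wa1 E * x + wa3 E != 0.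
    by apply/negP => /eqP h0; move: P3; rewrite /P waddE ?on_curve_Some ?c1 ?c2 // eqxx h0 eqxx.
  have ey := wpoly_same_x c1 c2 hc.
  move: P3; rewrite ey -/P P2 ey => -[] /eqP.
  by rewrite -subr_eq0 opprK addrr_eq0 (negbTE hy).
move: P3; rewrite /P waddE // (negbTE nx) /= /wslope nx /wsum_x a1 mul0r addr0 => -[ex _].
set lc := (y2 - y) / (x2 - x) in ex.
have hlc : lc * (x2 - x) = y2 - y by rewrite /lc; field; rewrite subr_eq0 eq_sym.
have ex2 : x2 = l ^+ 2 - wa2 E - x - x by rewrite /x2 /wsum_x a1 mul0r addr0.
have : (lc - l) * (lc + l) = 0.
  have -> : (lc - l) * (lc + l) = (lc ^+ 2 - wa2 E - x - x2 - x) - (l ^+ 2 - wa2 E - x - x - x2)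
    by ring.
  by rewrite ex -ex2 !subrr.
move/eqP; rewrite mulf_eq0 !subr_eq0 addr_eq0 => /orP [] /eqP elc.
  apply/eqP; rewrite -addrr_eq0; apply/eqP.
  have -> : y2 + y2 = (y2 - y) + (y2 + y) by ring.
  by rewrite -hlc elc ey2; ring.
have e0 : (y2 + y) - (y2 - y) = 0 by rewrite -hlc elc ey2; ring.
have : y = ((y2 + y) - (y2 - y)) / 2 by field.
by rewrite e0 mul0r => /eqP; rewrite (negbTE hy).
Qed.


Lemma wcubic_halving a b c x y : on_curve (wcubic a b c) (Some (x, y)) -> y != 0 ->
  wadd (wcubic a b c) (Some (x, y)) (Some (x, y)) = Some (a, 0) ->
  (x - a) ^+ 2 = (a - b) * (a - c).
Proof.
move=> hP hy; rewrite waddE // eqxx /= !mul0r !addr0 addrr_eq0 (negbTE hy).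
rewrite /wslope eqxx /wsum_x /= !mul0r !addr0 subr0 => -[ha _].
set l := (X in X ^+ 2) in ha.
have hl : l * (2 * y) = 3 * x ^+ 2 - 2 * (a + b + c) * x + (a * b + b * c + c * a).
  by rewrite /l; field; rewrite two_neq0 hy.
have hl2 : l ^+ 2 = 2 * x - b - c.
  transitivity ((l ^+ 2 - - (a + b + c) - x - x) - (a + b + c) + 2 * x); first by ring.
  by rewrite ha; ring.
have hy2 : y ^+ 2 = (x - a) * (x - b) * (x - c).
  by apply/eqP; rewrite -subr_eq0 -wpoly_cubic -on_curve_Some.
apply/eqP; rewrite -subr_eq0 -sqrf_eq0; apply/eqP.
transitivity ((l * (2 * y)) ^+ 2 - 4 * l ^+ 2 * y ^+ 2); last by ring.
by rewrite hl hl2 hy2; ring.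
Qed.

End Torsion.

(** * Extending K-embeddings to the separable closure *)

Definition subfield_closed (L : fieldType) (D : set L) :=
  [/\ D 1, (forall a b, D a -> D b -> D (a - b)),
      (forall a b, D a -> D b -> D (a * b)) & (forall a, D a -> D a^-1)].

Definition morph_on (L : fieldType) (D : set L) (f : L -> L) :=
  [/\ f 1 = 1, (forall a b, D a -> D b -> f (a - b) = f a - f b) &
      (forall a b, D a -> D b -> f (a * b) = f a * f b)].

Section SubfieldType.
Variables (L : fieldType) (D : set L) (hD : subfield_closed D).

(* The dummy dependency on hD lets the instance below be found from the predicate. *)
Definition subfield_pred : pred L := let _ := hD in fun w => `[< D w >].

Fact subfield_pred_closed : divring_closed subfield_pred.
Proof.
case: hD => D1 DB DM DV; split; first exact/asboolP.
- by move=> a b /asboolP Da /asboolP Db; apply/asboolP; apply: DB.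
- by move=> a b /asboolP Da /asboolP Db; apply/asboolP; apply: DM => //; apply: DV.
Qed.
HB.instance Definition _ := GRing.isDivringClosed.Build L subfield_pred subfield_pred_closed.

Record subfield_of := SubfieldOf { subfield_val :> L; _ : subfield_val \in subfield_pred }.
HB.instance Definition _ := [isSub for subfield_val].
HB.instance Definition _ := [Choice of subfield_of by <:].
HB.instance Definition _ := [SubChoice_isSubIntegralDomain of subfield_of by <:].
HB.instance Definition _ := [SubIntegralDomain_isSubField of subfield_of by <:].

Definition subfield_inj : {rmorphism subfield_of -> L} :=
  GRing.RMorphism.clone _ _ (val : subfield_of -> L) _.

Lemma subfield_mem (w : subfield_of) : D (val w).
Proof. by case: w => w /= /asboolP. Qed.

Definition subfield_elt (w : L) (Dw : D w) : subfield_of := SubfieldOf (asboolT Dw).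

End SubfieldType.

Definition mk_rmorph (F G : fieldType) (f : F -> G) (h1 : GRing.zmod_morphism f)
  (h2 : GRing.monoid_morphism f) : {rmorphism F -> G} :=
  HB.pack f (GRing.isZmodMorphism.Build F G f h1) (GRing.isMonoidMorphism.Build F G f h2).

Definition adjoin (F L : fieldType) (v : {rmorphism F -> L}) (x : L) : set L :=
  [set w | exists g : {poly F}, w = (map_poly v g).[x]].

Definition is_minpoly (F L : fieldType) (v : {rmorphism F -> L}) (x : L) (q : {poly F}) :=
  [/\ q != 0, root (map_poly v q) x &
      forall g : {poly F}, g != 0 -> root (map_poly v g) x -> (size q <= size g)%N].

Section MinimalPolynomial.
Variables (F L : fieldType) (v : {rmorphism F -> L}) (x : L).

Lemma minpoly_exists (p : {poly F}) :
  p != 0 -> root (map_poly v p) x -> exists q, is_minpoly v x q.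
Proof.
move=> pnz px.
pose P n := `[< exists g : {poly F}, [/\ g != 0, root (map_poly v g) x & size g = n] >].
have exP : exists n, P n by exists (size p); apply/asboolP; exists p.
case: (ex_minnP exP) => n /asboolP [q [qnz qx qs]] qmin; exists q; split => // g gnz gx.
by rewrite qs; apply: qmin; apply/asboolP; exists g.
Qed.

Variable q : {poly F}.
Hypothesis qmin : is_minpoly v x q.

Lemma minpoly_dvdp g : root (map_poly v g) x -> q %| g.
Proof.
case: qmin => qnz qx qle gx; apply/modp_eq0P; apply: contraTeq isT => hnz.
have : root (map_poly v (g %% q)) x.
  move: gx; rewrite {1}(divp_eq g q) rmorphD rmorphM /= rootE hornerD hornerM.
  by rewrite (rootP qx) mulr0 add0r.
by move/(qle _ hnz); rewrite leqNgt ltn_modp qnz.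
Qed.

Lemma adjoin_base c : adjoin v x (v c).
Proof. by exists c%:P; rewrite map_polyC hornerC. Qed.

Lemma adjoin_gen : adjoin v x x.
Proof. by exists 'X; rewrite map_polyX hornerX. Qed.

Lemma subfield_adjoin : subfield_closed (adjoin v x).
Proof.
have [qnz qx qle] := qmin.
have qirr : irreducible_poly q by apply/(subfx_irreducibleP qx qnz) => g /qle; apply.
split; first by rewrite -(rmorph1 v); apply: adjoin_base.
- by move=> _ _ [g1 ->] [g2 ->]; exists (g1 - g2); rewrite rmorphB hornerD hornerN.
- by move=> _ _ [g1 ->] [g2 ->]; exists (g1 * g2); rewrite rmorphM hornerM.
move=> _ [g ->]; have [g0|gnz] := eqVneq (map_poly v g).[x] 0.
  by rewrite g0 invr0; exists 0; rewrite rmorph0 horner0.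
have cop : coprimep q g.
  rewrite irreducible_poly_coprime //; apply/negP => /dvdpP [h eh].
  by move: gnz; rewrite eh rmorphM hornerM (rootP qx) mulr0 eqxx.
have [[u1 u2] /= hu] := Bezout_eq1_coprimepP _ _ cop; exists u2.
have : (map_poly v (u1 * q + u2 * g)).[x] = 1 by rewrite hu rmorph1 hornerC.
rewrite rmorphD !rmorphM hornerD !hornerM (rootP qx) mulr0 add0r => h.
by rewrite -[_^-1]mul1r -h -mulrA mulfV // mulr1.
Qed.

Variables (phi : {rmorphism F -> L}) (y : L).
Hypothesis qy : root (map_poly phi q) y.

(* The morphism F(x) -> L sending x to y, extended by 0 outside F(x). *)
Definition adjoin_map (w : L) : L :=
  if pselect (adjoin v x w) is left H then (map_poly phi (projT1 (cid H))).[y] else 0.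

Lemma adjoin_mapE g : adjoin_map (map_poly v g).[x] = (map_poly phi g).[y].
Proof.
rewrite /adjoin_map; case: pselect => [H|]; last by case; exists g.
case: (cid H) => g' /= eg'; apply/eqP; rewrite -subr_eq0 -hornerN -hornerD -rmorphB.
have /dvdpP [h ->] : q %| g' - g.
  by apply: minpoly_dvdp; rewrite rmorphB rootE hornerD hornerN -eg' subrr.
by rewrite rmorphM hornerM (rootP qy) mulr0.
Qed.

Lemma adjoin_map_base c : adjoin_map (v c) = phi c.
Proof. by rewrite -[v c](hornerC _ x) -map_polyC adjoin_mapE map_polyC hornerC. Qed.

Lemma adjoin_map_gen : adjoin_map x = y.
Proof. by rewrite -[x](hornerX x) -(map_polyX v) adjoin_mapE map_polyX hornerX. Qed.

Lemma adjoin_map_morph : morph_on (adjoin v x) adjoin_map.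
Proof.
split; first by have := adjoin_map_base 1; rewrite !rmorph1.
- move=> _ _ [g1 ->] [g2 ->].
  by rewrite -hornerN -hornerD -rmorphB !adjoin_mapE rmorphB hornerD hornerN.
- move=> _ _ [g1 ->] [g2 ->].
  by rewrite -hornerM -rmorphM !adjoin_mapE rmorphM hornerM.
Qed.

End MinimalPolynomial.

Section SquareRoot.
Variables (L : fieldType) (D : set L) (hD : subfield_closed D).

Lemma map_poly_sqr (c : subfield_of hD) :
  map_poly (subfield_inj hD) ('X^2 - c%:P) = 'X^2 - (val c)%:P.
Proof.
apply/polyP => i; rewrite coef_map !(coefB, coefXn, coefC) raddfB.
by case: (i == 2)%N; case: (i == 0)%N.
Qed.

Lemma minpoly_sqr (c : subfield_of hD) (y : L) : y ^+ 2 = val c -> ~ D y ->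
  is_minpoly (subfield_inj hD) y ('X^2 - c%:P).
Proof.
move=> yc yD; set v := subfield_inj hD; set q := 'X^2 - c%:P.
have sq : size q = 3%N.
  by rewrite size_polyDl ?size_polyXn // size_polyN size_polyC; case: (_ != 0).
split; first by rewrite -size_poly_eq0 sq.
  by rewrite map_poly_sqr rootE !hornerE yc subrr.
move=> g gnz gy; rewrite sq leqNgt; apply/negP => hs; apply: yD.
have gv : (map_poly v g).[y] = v g`_0 + v g`_1 * y.
  rewrite (@horner_coef_wide _ 2) ?size_map_poly //.
  by rewrite !big_ord_recr big_ord0 !coef_map /= add0r expr0 mulr1 expr1.
have g1 : g`_1 != 0.
  apply: contraNneq gnz => g1; apply/eqP/polyP => -[|[|i]]; rewrite coef0 //.
    by apply: (fmorph_inj v); move/rootP: gy; rewrite gv g1 rmorph0 mul0r addr0 => ->.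
  by rewrite nth_default // (leq_trans (ltnSE hs)).
have vg1 : v g`_1 != 0 by rewrite fmorph_eq0.
have -> : y = v (- (g`_0 / g`_1)).
  rewrite rmorphN fmorph_div; apply: (mulfI vg1); rewrite mulrN mulrCA divff // mulr1.
  by apply/eqP; rewrite -addr_eq0 addrC -gv.
exact: subfield_mem.
Qed.

End SquareRoot.

Section PartialEmbeddings.
Variables (K L : fieldType) (iota : {rmorphism K -> L}).

Record pemb := PEmb { pdom : set L; pfun : L -> L }.

Definition kemb (e : pemb) :=
  [/\ subfield_closed (pdom e), morph_on (pdom e) (pfun e) &
      forall k, pdom e (iota k) /\ pfun e (iota k) = iota k].

Definition pemb_le (e e' : pemb) :=
  (forall w, pdom e w -> pdom e' w) /\ (forall w, pdom e w -> pfun e' w = pfun e w).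

Lemma pemb_le_refl e : pemb_le e e.
Proof. by split. Qed.

Lemma pemb_le_trans e1 e2 e3 : pemb_le e1 e2 -> pemb_le e2 e3 -> pemb_le e1 e3.
Proof.
move=> [sub12 eq12] [sub23 eq23]; split=> w Dw; first exact/sub23/sub12.
by rewrite eq23 ?eq12 //; apply: sub12.
Qed.

Lemma kemb_subfield e : kemb e -> subfield_closed (pdom e).
Proof. by case. Qed.

Hypothesis Hsep : is_sep_closure iota.

Section OneStep.
Variables (e : pemb) (he : kemb e).
Local Notation hD := (kemb_subfield he).
Local Notation FD := (subfield_of hD).
Let hK k : pdom e (iota k). Proof. by have [_ _ /(_ k) []] := he. Qed.

Fact pemb_zmod : GRing.zmod_morphism (fun w : FD => pfun e (val w)).
Proof. by have [_ [_ fB _] _] := he; move=> a b; rewrite /= fB //; apply: subfield_mem. Qed.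

Fact pemb_monoid : GRing.monoid_morphism (fun w : FD => pfun e (val w)).
Proof.
have [_ [f1 _ fM] _] := he; split => [|a b]; first exact: f1.
by rewrite /= fM //; apply: subfield_mem.
Qed.

Definition pemb_morph : {rmorphism FD -> L} := mk_rmorph pemb_zmod pemb_monoid.

Fact iota_dom_zmod : GRing.zmod_morphism (fun k => subfield_elt hD (hK k)).
Proof. by move=> a b; apply: val_inj; rewrite [RHS](rmorphB (subfield_inj hD)) /= rmorphB. Qed.

Fact iota_dom_monoid : GRing.monoid_morphism (fun k => subfield_elt hD (hK k)).
Proof.
split=> [|a b]; apply: val_inj; first by rewrite [RHS](rmorph1 (subfield_inj hD)) /= rmorph1.
by rewrite [RHS](rmorphM (subfield_inj hD)) /= rmorphM.
Qed.

Definition iota_dom : {rmorphism K -> FD} := mk_rmorph iota_dom_zmod iota_dom_monoid.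

Lemma pemb_morph_iota_dom k : pemb_morph (iota_dom k) = iota k.
Proof. by have [_ _ /(_ k) []] := he. Qed.

Lemma kemb_extend_root x y (q : {poly FD}) : is_minpoly (subfield_inj hD) x q ->
  root (map_poly pemb_morph q) y ->
  exists e', [/\ kemb e', pemb_le e e', pdom e' x & pfun e' x = y].
Proof.
move=> qmin qy; set v := subfield_inj hD.
exists (PEmb (adjoin v x) (adjoin_map v x pemb_morph y)); split.
- split; [exact: (subfield_adjoin qmin) | exact: (adjoin_map_morph qmin qy) |] => k.
  split; first exact: (adjoin_base v x (iota_dom k)).
  by rewrite -[RHS](pemb_morph_iota_dom k); exact: (adjoin_map_base qmin qy (iota_dom k)).
- split=> w Dw; have <- : v (subfield_elt hD Dw) = w by [].
    exact: adjoin_base.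
  exact: (adjoin_map_base qmin qy).
- exact: adjoin_gen.
- exact: (adjoin_map_gen qmin qy).
Qed.

Lemma kemb_extend x : exists e', [/\ kemb e', pemb_le e e' & pdom e' x].
Proof.
case: Hsep => Halg Hroot; have [p [pnz psep px]] := Halg x.
set v := subfield_inj hD; pose pF := map_poly iota_dom p.
have pFv : map_poly v pF = map_poly iota p by rewrite -map_poly_comp.
have pFphi : map_poly pemb_morph pF = map_poly iota p.
  by rewrite -map_poly_comp; apply: eq_map_poly => k; exact: pemb_morph_iota_dom.
have [q qmin] : exists q, is_minpoly v x q.
  by apply: (minpoly_exists (p := pF)); rewrite ?map_poly_eq0 ?pFv.
have [qnz qx _] := qmin.
have qsep : separable_poly (map_poly pemb_morph q).
  apply: (dvdp_separable _ (_ : separable_poly (map_poly iota p))).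
    by rewrite -pFphi dvdp_map; apply: (minpoly_dvdp qmin); rewrite pFv.
  by rewrite separable_map.
have qsize : (1 < size (map_poly pemb_morph q))%N.
  rewrite size_map_poly -(size_map_poly v); apply: (root_size_gt1 _ qx).
  by rewrite map_poly_eq0.
have [y qy] := Hroot _ qsep qsize.
by have [e' [? ? ? _]] := kemb_extend_root qmin qy; exists e'.
Qed.

End OneStep.

Section Zorn.
Variables (e0 : pemb) (he0 : kemb e0).

Let T := {e : pemb | kemb e /\ pemb_le e0 e}.
Let t0 : T := exist _ e0 (conj he0 (pemb_le_refl e0)).
Let R (a b : T) : bool := `[< pemb_le (sval a) (sval b) >].

Let R_t0 t : R t0 t.
Proof. exact/asboolP/(proj2 (svalP t)). Qed.

Section ChainUnion.
Variables (A : set T) (Atot : total_on A R).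
Let B t := A t \/ t = t0.

Let B_total s t : B s -> B t -> R s t \/ R t s.
Proof. by move=> [As|->] [At|->]; [exact: Atot | right | left | left]; apply: R_t0. Qed.

Let udom (w : L) := exists t, B t /\ pdom (sval t) w.
Let ufun (w : L) : L :=
  if pselect (udom w) is left H then pfun (sval (projT1 (cid H))) w else 0.

Let ufunE t w : B t -> pdom (sval t) w -> ufun w = pfun (sval t) w.
Proof.
move=> Bt Dw; rewrite /ufun; case: pselect => [H|]; last by case; exists t.
case: (cid H) => t' [Bt' Dw'] /=.
by case: (B_total Bt Bt') => /asboolP [_ h]; [exact: h | exact/esym/h].
Qed.

Let udom2 w1 w2 : udom w1 -> udom w2 ->
  exists t, [/\ B t, pdom (sval t) w1 & pdom (sval t) w2].
Proof.
move=> [t1 [B1 D1]] [t2 [B2 D2]].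
by case: (B_total B1 B2) => /asboolP [h _]; [exists t2 | exists t1]; split => //; apply: h.
Qed.

Let kemb_union : kemb (PEmb udom ufun).
Proof.
have kt (t : T) : kemb (sval t) by case: (svalP t).
have B0 : B t0 by right.
split.
- split; first by exists t0; case: he0 => [[]].
  + move=> a b /udom2 /[apply] -[t [Bt Da Db]].
    by exists t; split => //; case: (kt t) => [[_ hB _ _] _ _]; apply: hB.
  + move=> a b /udom2 /[apply] -[t [Bt Da Db]].
    by exists t; split => //; case: (kt t) => [[_ _ hM _] _ _]; apply: hM.
  + move=> a [t [Bt Da]]; exists t; split => //.
    by case: (kt t) => [[_ _ _ hV] _ _]; apply: hV.
- split; first by rewrite /= (ufunE B0) //=; case: he0 => [[? _ _ _] [? _ _] _].
  + move=> a b /udom2 /[apply] -[t [Bt Da Db]].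
    case: (kt t) => [[_ hB _ _] [_ fB _] _].
    by rewrite /= !(ufunE Bt) ?fB //; apply: hB.
  + move=> a b /udom2 /[apply] -[t [Bt Da Db]].
    case: (kt t) => [[_ _ hM _] [_ _ fM] _].
    by rewrite /= !(ufunE Bt) ?fM //; apply: hM.
- move=> k; case: he0 => _ _ /(_ k) [Dk fk].
  by split; [exists t0 | rewrite /= (ufunE B0)].
Qed.

Let pemb_le_union t : B t -> pemb_le (sval t) (PEmb udom ufun).
Proof. by move=> Bt; split=> w Dw /=; [exists t | rewrite (ufunE Bt)]. Qed.

Lemma chain_ub : exists t, forall s, A s -> R s t.
Proof.
have B0 : B t0 by right.
exists (exist _ (PEmb udom ufun) (conj kemb_union (pemb_le_union B0))).
by move=> s As; apply/asboolP/pemb_le_union; left.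
Qed.

End ChainUnion.

Lemma kemb_total : exists f : L -> L, [/\ morph_on setT f,
  forall k, f (iota k) = iota k & forall w, pdom e0 w -> f w = pfun e0 w].
Proof.
have [m mmax] : exists m, premaximal R m.
  apply: (ZL_preorder t0) => [t | r s t /asboolP h1 /asboolP h2 | A Atot].
  - exact/asboolP/pemb_le_refl.
  - exact/asboolP/(pemb_le_trans h1).
  - exact: chain_ub.
have [km le0m] := svalP m.
have Dm x : pdom (sval m) x.
  have [e' [ke' lee' De']] := kemb_extend km x.
  pose m' : T := exist _ e' (conj ke' (pemb_le_trans le0m lee')).
  have /mmax /asboolP [sub _] : R m m' by exact/asboolP.
  exact: sub.
case: km => _ [f1 fB fM] fK; exists (pfun (sval m)); split => //.
- by split=> // a b _ _; [apply: fB | apply: fM].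
- by move=> k; case: (fK k).
- by move=> w Dw; case: le0m => _; apply.
Qed.

End Zorn.

(* s permutes the finitely many roots in L of a polynomial over K vanishing at z. *)
Lemma fixing_surj (s : {rmorphism L -> L}) : (forall k, s (iota k) = iota k) ->
  forall z, exists w, s w = z.
Proof.
move=> hs z; case: Hsep => Halg _; have [p [pnz _ pz]] := Halg z.
set pL := map_poly iota p.
have pLnz : pL != 0 by rewrite map_poly_eq0.
have pLs : map_poly s pL = pL by apply/polyP => i; rewrite !coef_map /= hs.
pose P n := `[< exists r : seq L, [/\ uniq r, all (root pL) r & size r = n] >].
have exP : exists n, P n by exists 0%N; apply/asboolP; exists [::].
have ubP n : P n -> (n <= size pL)%N.
  by move=> /asboolP [r [ur ar <-]]; apply: ltnW; apply: max_poly_roots.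
case: (ex_maxnP exP ubP) => n /asboolP [r [ur ar sr]] rmax.
have maxr a : root pL a -> a \in r.
  apply: contraLR => ar'; apply/negP => pa.
  have : P n.+1 by apply/asboolP; exists (a :: r); rewrite /= ar' ur pa ar sr.
  by move/rmax; rewrite ltnn.
have sub : {subset map s r <= r}.
  move=> _ /mapP [a ra ->]; apply: maxr.
  by rewrite -pLs; apply: rmorph_root; move/allP: ar; apply.
have us : uniq (map s r) by rewrite map_inj_uniq //; apply: fmorph_inj.
have [_ eq_r] := uniq_min_size us sub (eq_leq (esym (size_map _ _))).
have /mapP [a _ ->] : z \in map s r by rewrite eq_r maxr.
by exists a.
Qed.

Lemma kemb_galois (e0 : pemb) : kemb e0 ->
  exists s : {rmorphism L -> L}, in_GK iota s /\ forall w, pdom e0 w -> s w = pfun e0 w.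
Proof.
move=> he0; have [f [[f1 fB fM] fK fe]] := kemb_total he0.
have fz : GRing.zmod_morphism f by move=> a b; apply: fB.
have fm : GRing.monoid_morphism f by split => // a b; apply: fM.
pose s := mk_rmorph fz fm; exists s; split => //; split => //.
have sj := fixing_surj (s := s) fK.
exists (fun z => projT1 (cid (sj z))) => [w | z]; last by case: (cid (sj z)).
by case: (cid (sj (s w))) => w' /= /(fmorph_inj s).
Qed.

End PartialEmbeddings.

Section QuadraticConjugate.
Variables (K L : fieldType) (iota : {rmorphism K -> L}).
Hypothesis Hsep : is_sep_closure iota.

Lemma galois_sqrt_conj x y : adjoin iota x (y ^+ 2) -> ~ adjoin iota x y ->
  exists s : {rmorphism L -> L}, [/\ in_GK iota s, s x = x & s y = - y].
Proof.
move=> y2D yD.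
have [q0 q0min] : exists q, is_minpoly iota x q.
  by have [p [pnz _ px]] := Hsep.1 x; exact: minpoly_exists pnz px.
pose e1 := PEmb (adjoin iota x) id.
have ke1 : kemb iota e1.
  by split=> //=; [exact: subfield_adjoin q0min | move=> k; split=> //; apply: adjoin_base].
set D1 := kemb_subfield ke1; pose c := subfield_elt D1 y2D.
have qmin := minpoly_sqr (c := c) erefl yD.
have qy : root (map_poly (pemb_morph ke1) ('X^2 - c%:P)) (- y).
  have -> : map_poly (pemb_morph ke1) ('X^2 - c%:P) = map_poly (subfield_inj D1) ('X^2 - c%:P).
    exact: eq_map_poly.
  by rewrite map_poly_sqr rootE !hornerE sqrrN subrr.
have [e2 [ke2 [sub12 le12] De2y e2y]] := kemb_extend_root qmin qy.
have [s [sG se2]] := kemb_galois Hsep ke2.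
have De1x : pdom e1 x by exact: adjoin_gen.
exists s; split => //; first by rewrite se2 ?le12 //; apply: sub12.
by rewrite -e2y; apply: se2.
Qed.

End QuadraticConjugate.

(** * The criterion *)

Section RationalCoordinates.
Variables (K L : fieldType) (iota : {rmorphism K -> L}).

Lemma adjoin_quadratic (c0 c1 : K) (x : L) : x ^+ 2 = iota c1 * x + iota c0 ->
  forall w, adjoin iota x w -> exists u v, w = iota u + iota v * x.
Proof.
move=> hx _ [g ->]; elim/poly_ind: g => [|g c [u [v IH]]].
  by exists 0, 0; rewrite map_poly0 horner0 !rmorph0 mul0r addr0.
exists (c + v * c0), (u + v * c1).
have -> : map_poly iota (g * 'X + c%:P) = map_poly iota g * 'X + (iota c)%:P.
  by rewrite rmorphD rmorphM /= map_polyX map_polyC.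
rewrite hornerD hornerM hornerX hornerC IH.
by rewrite !(rmorphD, rmorphM) mulrDl -mulrA -expr2 hx; ring.
Qed.

Lemma rat_coords_eq0 (s : L) (c d : K) : ~ (exists s0, s = iota s0) ->
  iota d = iota c * s -> c = 0 /\ d = 0.
Proof.
move=> ns e; have c0 : c = 0.
  apply: contrapT => /eqP cnz; apply: ns; exists (d / c).
  by rewrite fmorph_div e mulrAC divff ?mul1r // fmorph_eq0.
by split=> //; apply: (fmorph_inj iota); rewrite e c0 !rmorph0 mul0r.
Qed.

End RationalCoordinates.

Section HalvingSquare.
Variable K : fieldType.
Implicit Types (a b s y u v : K).

Lemma halving_square_rat a b s y : a != 0 -> s ^+ 2 = a * b ->
  y ^+ 2 = a * b * (a + b + 2 * s) -> y != 0 -> is_nz_square a.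
Proof.
move=> ha hs hy y0.
have : a * b * (a + b + 2 * s) != 0 by rewrite -hy expf_neq0.
rewrite !mulf_eq0 !negb_or => /andP [/andP [_ hb] hw]; exists ((a + s) * s / y).
have sq : ((a + s) * s / y) ^+ 2 = a.
  have -> : ((a + s) * s / y) ^+ 2 = (a ^+ 2 + 2 * a * s + s ^+ 2) * s ^+ 2 / y ^+ 2.
    by field.
  by rewrite hy hs; field; rewrite ha hb hw.
by split=> //; apply: contraNneq ha => h; rewrite -sq h expr0n.
Qed.

Lemma halving_square_irrat a b u v : a * b != 0 -> u * v = a * b ->
  u ^+ 2 + v ^+ 2 * (a * b) = a * b * (a + b) -> is_nz_square a \/ is_nz_square b.
Proof.
move=> hab huv hd; have vnz : v != 0 by apply: contra hab => /eqP v0; rewrite -huv v0 mulr0.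
have : a * b * ((v ^+ 2 - a) * (v ^+ 2 - b)) = 0.
  transitivity (v ^+ 2 * (u ^+ 2 + v ^+ 2 * (a * b) - a * b * (a + b))
    - ((u * v) ^+ 2 - (a * b) ^+ 2)); first by ring.
  by rewrite hd huv !subrr mulr0 subr0.
move/eqP; rewrite mulf_eq0 (negbTE hab) mulf_eq0 !subr_eq0 /= => /orP [] /eqP h.
  by left; exists v.
by right; exists v.
Qed.

End HalvingSquare.

Definition rational_two_torsion (K L : fieldType) (iota : {rmorphism K -> L}) (E : wcoef K) :=
  forall P : wpoint L, on_curve (wmap iota E) P -> P != None -> wadd (wmap iota E) P P = None ->
    exists Q : wpoint K, on_curve E Q /\ P = point_map iota Q.

Section LegendreCriterion.
Variables (K L : fieldType) (iota : {rmorphism K -> L}).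
Hypotheses (two_neq0 : (2 : K) != 0) (Hsep : is_sep_closure iota).

Let two_neq0L : (2 : L) != 0.
Proof. by rewrite -(rmorph_nat iota 2) fmorph_eq0. Qed.

Lemma sqrt_exists (d : L) : exists w, w ^+ 2 = d.
Proof.
have [->|dnz] := eqVneq d 0; first by exists 0; rewrite expr0n.
pose p := 'X^2 - d%:P : {poly L}.
have sp : size p = 3%N by rewrite size_polyDl ?size_polyXn // size_polyN size_polyC dnz.
have sep : separable_poly p.
  rewrite unlock /p derivB derivXn derivC subr0 /= -scaler_nat coprimepZr //.
  rewrite -[X in coprimep _ X]subr0 -polyC0 coprimep_XsubC rootE !hornerE.
  by rewrite expr0n /= sub0r oppr_eq0.
have [w /rootP] : exists w, root p w by apply: Hsep.2 sep _; rewrite sp.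
by rewrite !hornerE => /eqP; rewrite subr_eq0 => /eqP; exists w.
Qed.

Lemma wchg_map_fixed (s : {rmorphism L -> L}) (c : wchg K) :
  (forall k, s (iota k) = iota k) -> wchg_map s (wchg_map iota c) = wchg_map iota c.
Proof. by move=> sK; case: c => u r s' t; rewrite /wchg_map /= !sK. Qed.

Lemma cond3_wiso E E' : wiso E E' -> cond3 iota E' -> cond3 iota E.
Proof.
move=> /wisoE [c hu h] [tors [P' [hP' h4 hno]]]; set cL := wchg_map iota c.
have huL : chu cL != 0 by rewrite fmorph_eq0.
have hL : wchange (wmap iota E) (wmap iota E') cL := wchange_map iota h.
have hLi := wchange_inv huL hL.
have huLi : chu (wchg_inv cL) != 0 by case: (cL) huL => u r s t; rewrite /= invr_eq0.
split.
  move=> P hP hnz h2; set P1 := wchange_pt (wchg_inv cL) P.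
  have hP1 : on_curve (wmap iota E') P1 by rewrite (on_curve_change _ huLi hLi).
  have nz1 : P1 != None by rewrite wchange_pt_eq0.
  have h21 : wadd (wmap iota E') P1 P1 = None by rewrite -(wadd_change huLi hLi hP hP) h2.
  have [Q [hQ eQ]] := tors P1 hP1 nz1 h21.
  exists (wchange_pt c Q); split; first by rewrite (on_curve_change _ hu h).
  by rewrite point_map_change -eQ wchange_ptVK.
exists (wchange_pt cL P'); split; first by rewrite (on_curve_change _ huL hL).
  by rewrite -(wmul_change _ huL hL hP') h4.
move=> [s [sG es]]; apply: hno; exists s; split => //; have [_ sK] := sG.
apply: (can_inj (wchange_ptK huL)).
by rewrite (wneg_change _ hL) -es point_map_change wchg_map_fixed.
Qed.

Lemma cubic_two_torsion_rational (a b c : K) : rational_two_torsion iota (wcubic a b c).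
Proof.
move=> P; rewrite wmap_cubic; case: P => [[x y]|] // hP _ h2.
have [-> hx] := wcubic_two_torsion two_neq0L hP h2.
have e0 e : (e == a) || (e == b) || (e == c) -> on_curve (wcubic a b c) (Some (e, 0)).
  rewrite on_curve_Some wpoly_cubic => /orP [/orP [] | ] /eqP ->; apply/eqP; ring.
case: hx => ->; [exists (Some (a, 0)) | exists (Some (b, 0)) | exists (Some (c, 0))];
  by rewrite e0 ?eqxx ?orbT //= rmorph0.
Qed.

Lemma cond3_legendre (l : K) : l != 0 -> l != 1 -> cond3 iota (wlegendre l).
Proof.
move=> l0 l1; split; first exact: cubic_two_torsion_rational.
have [be hbe] := sqrt_exists (iota (1 - l)).
have b0 : be != 0.
  apply: contra l1 => /eqP b0; move: hbe; rewrite b0 expr0n => /esym/eqP.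
  by rewrite fmorph_eq0 subr_eq0 eq_sym.
have b1 : 1 + be != 0.
  apply: contra l0 => /eqP b1; have bm : be = -1 by apply/eqP; rewrite -addr_eq0 addrC b1.
  move: hbe; rewrite bm sqrrN expr1n -(rmorph1 iota) => /(fmorph_inj iota) h.
  by apply/eqP; rewrite -(subKr 1 l) -h subrr.
have el : iota l = 1 - be ^+ 2 by rewrite hbe rmorphB rmorph1; ring.
rewrite wmap_legendre el; exists (Some (1 + be, be * (1 + be))); split.
- by rewrite on_curve_Some wpoly_cubic; apply/eqP; ring.
- exact: wlegendre_four_torsion.
move=> [s [[_ sK] /= [e1 e2]]].
have sb : s be = be by move: e1; rewrite rmorphD rmorph1 => /addrI.
move: e2; rewrite rmorphM e1 sb mul0r !subr0 => /eqP; rewrite -subr_eq0 opprK.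
by rewrite -mulr2n -mulr_natl !mulf_eq0 (negbTE two_neq0L) (negbTE b0) (negbTE b1).
Qed.

Lemma short_cubic_splits (A B C e1 : K) :
  (forall z : L, on_curve (wmap iota (WCoef 0 A 0 B C)) (Some (z, 0)) -> exists e, z = iota e) ->
  on_curve (WCoef 0 A 0 B C) (Some (e1, 0)) -> exists e2 e3, WCoef 0 A 0 B C = wcubic e1 e2 e3.
Proof.
move=> rat he1; set p1 := A + e1; set p0 := B + e1 * p1.
have hC : C = - (e1 * p0).
  transitivity (C + wpoly (WCoef 0 A 0 B C) e1 0); last by rewrite /wpoly /p0 /p1 /=; ring.
  by move: he1; rewrite on_curve_Some => /eqP ->; rewrite addr0.
have four_neq0L : (4 : L) != 0 by rewrite (_ : 4 = 2 * 2) ?mulf_neq0 //; ring.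
have [w hw] := sqrt_exists (iota (p1 ^+ 2 - 4 * p0)).
set z := (w - iota p1) / 2.
have hz : z ^+ 2 + iota p1 * z + iota p0 = 0.
  transitivity ((w ^+ 2 - iota (p1 ^+ 2 - 4 * p0)) / 4); last by rewrite hw subrr mul0r.
  by rewrite /z !(rmorphE, rmorphM, rmorph_nat); field; rewrite two_neq0L four_neq0L.
have [e2 ez] : exists e, z = iota e.
  apply: rat; rewrite on_curve_Some; apply/eqP.
  transitivity (- ((z - iota e1) * (z ^+ 2 + iota p1 * z + iota p0))).
    by rewrite /wpoly /= hC /p0 /p1 !(rmorphE, rmorphM); ring.
  by rewrite hz mulr0 oppr0.
have hq : e2 ^+ 2 + p1 * e2 + p0 = 0.
  by apply: (fmorph_inj iota); rewrite rmorph0 -hz ez !(rmorphE, rmorphM).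
exists e2, (- p1 - e2); rewrite /wcubic; congr WCoef.
- by rewrite /p1; ring.
- transitivity (B - (e2 ^+ 2 + p1 * e2 + p0)); first by rewrite hq subr0.
  by rewrite /p0 /p1; ring.
- rewrite hC; transitivity (- (e1 * (p0 - (e2 ^+ 2 + p1 * e2 + p0)))); last by ring.
  by rewrite hq subr0.
Qed.

Lemma short_model_cubic (S : wcoef K) x y : wa1 S = 0 -> wa3 S = 0 ->
  rational_two_torsion iota S -> on_curve (wmap iota S) (Some (x, y)) -> y != 0 ->
  wmul (wmap iota S) 4 (Some (x, y)) = None ->
  exists e1 e2 e3, S = wcubic e1 e2 e3 /\
    wadd (wmap iota S) (Some (x, y)) (Some (x, y)) = Some (iota e1, 0).
Proof.
case: S => a1 A a3 B C ea1 ea3; rewrite /= in ea1 ea3; subst a1 a3 => tors hP hy h4.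
have a1L : wa1 (wmap iota (WCoef 0 A 0 B C)) = 0 by rewrite /= rmorph0.
have a3L : wa3 (wmap iota (WCoef 0 A 0 B C)) = 0 by rewrite /= rmorph0.
have [x2 P2] := short_four_torsion two_neq0L a1L a3L hP hy h4.
have rat z : on_curve (wmap iota (WCoef 0 A 0 B C)) (Some (z, 0)) -> exists e, z = iota e.
  move=> hz; have [|Q [_]] := tors _ hz isT.
    by rewrite waddE // eqxx a1L a3L mul0r !addr0 eqxx.
  by case: Q => [[q1 q2]|] // [-> _]; exists q1.
have := on_curve_wadd hP hP; rewrite P2 => hx2.
have [e1 ex2] := rat _ hx2.
have he1 : on_curve (WCoef 0 A 0 B C) (Some (e1, 0)).
  by rewrite -(on_curve_map iota) [point_map _ _]/= rmorph0 -ex2.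
have [e2 [e3 eS]] := short_cubic_splits rat he1.
by exists e1, e2, e3; rewrite -ex2.
Qed.

Lemma halving_conj_square (a b u v : K) (s y : L) : a != 0 -> b != 0 ->
  s ^+ 2 = iota (a * b) -> y ^+ 2 = iota (a * b) * (iota a + iota b + 2 * s) -> y != 0 ->
  y = iota u + iota v * s -> is_nz_square a \/ is_nz_square b.
Proof.
move=> ha hb hs hy y0 ey; have hab : a * b != 0 by rewrite mulf_neq0.
case: (pselect (exists s0, s = iota s0)) => [[s0 es] | ns].
  left; apply: (halving_square_rat (b := b) (s := s0) (y := u + v * s0)) => //.
  - by apply: (fmorph_inj iota); rewrite rmorphXn -es hs.
  - apply: (fmorph_inj iota); rewrite rmorphXn rmorphD rmorphM -es -ey hy.
    by rewrite !(rmorphM, rmorphD, rmorph_nat) -es.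
  - by apply: contra y0 => /eqP h; rewrite ey es -rmorphM -rmorphD h rmorph0.
rewrite rmorphM in hs hy.
pose d := u ^+ 2 + v ^+ 2 * (a * b) - a * b * (a + b); pose c := 2 * a * b - 2 * u * v.
have key : iota d = iota c * s.
  apply/eqP; rewrite -subr_eq0; apply/eqP.
  transitivity ((iota u + iota v * s) ^+ 2 - iota a * iota b * (iota a + iota b + 2 * s)
    + iota v ^+ 2 * (iota a * iota b - s ^+ 2)).
    by rewrite /d /c !(rmorphE, rmorphM, rmorph_nat); ring.
  by rewrite -ey hy hs !subrr mulr0 addr0.
have [c0 d0] := rat_coords_eq0 ns key.
apply: (halving_square_irrat hab (u := u) (v := v)); last by apply/eqP; rewrite -subr_eq0 -/d d0.
have : 2 * (a * b - u * v) = 0 by rewrite -c0 /c; ring.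
by move/eqP; rewrite mulf_eq0 (negbTE two_neq0) subr_eq0 => /eqP.
Qed.

Lemma cubic_halving_conj (e1 e2 e3 : K) (x y : L) : e1 != e2 -> e1 != e3 ->
  ~ is_nz_square (e1 - e2) -> ~ is_nz_square (e1 - e3) ->
  on_curve (wcubic (iota e1) (iota e2) (iota e3)) (Some (x, y)) -> y != 0 ->
  wadd (wcubic (iota e1) (iota e2) (iota e3)) (Some (x, y)) (Some (x, y)) = Some (iota e1, 0) ->
  exists s : {rmorphism L -> L}, [/\ in_GK iota s, s x = x & s y = - y].
Proof.
move=> d12 d13 nsq12 nsq13 hP ynz P2.
have hcurve : y ^+ 2 = (x - iota e1) * (x - iota e2) * (x - iota e3).
  by apply/eqP; rewrite -subr_eq0 -wpoly_cubic -on_curve_Some.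
have hs : (x - iota e1) ^+ 2 = iota ((e1 - e2) * (e1 - e3)).
  by rewrite (wcubic_halving two_neq0L hP ynz P2) rmorphM !rmorphB.
have hy : y ^+ 2 = iota ((e1 - e2) * (e1 - e3)) *
    (iota (e1 - e2) + iota (e1 - e3) + 2 * (x - iota e1)).
  rewrite hcurve; transitivity ((x - iota e1) * (x - iota e1) ^+ 2
    + (iota (e1 - e2) + iota (e1 - e3)) * (x - iota e1) ^+ 2
    + iota (e1 - e2) * iota (e1 - e3) * (x - iota e1)); first by rewrite !rmorphB; ring.
  by rewrite hs rmorphM; ring.
have hx2 : x ^+ 2 = iota (2 * e1) * x + iota ((e1 - e2) * (e1 - e3) - e1 ^+ 2).
  by rewrite rmorphB -hs rmorphM rmorphXn rmorph_nat; ring.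
apply: galois_sqrt_conj => //.
  exists (('X - e1%:P) * ('X - e2%:P) * ('X - e3%:P)).
  by rewrite !rmorphM /= !map_polyXsubC !hornerM !hornerXsubC.
move=> /(adjoin_quadratic hx2) [u [v euv]].
have [] // := halving_conj_square (u := u + v * e1) (v := v) _ _ hs hy ynz; rewrite ?subr_eq0 //.
by rewrite euv rmorphD rmorphM; ring.
Qed.

Lemma cond3_short_square_model (S : wcoef K) : wa1 S = 0 -> wa3 S = 0 ->
  elliptic S -> cond3 iota S -> cubic_square_model S.
Proof.
move=> a1 a3 hS [tors [P [hP h4 hno]]]; apply: contrapT => hnc; apply: hno.
have GK_id : in_GK iota (idfun : {rmorphism L -> L}) by split => //; exists idfun.
case: P hP h4 => [[x y]|] hP h4; last by exists idfun.
have [y0|ynz] := eqVneq y 0.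
  by exists idfun; split => //=; rewrite a1 a3 rmorph0 y0 mul0r !subr0 oppr0.
have [e1 [e2 [e3 [eS P2]]]] := short_model_cubic a1 a3 tors hP ynz h4.
subst S; rewrite wmap_cubic in hP P2.
have [d12 _ d31] := elliptic_cubic_uniq hS.
have d13 : e1 != e3 by rewrite eq_sym.
have nsq12 : ~ is_nz_square (e1 - e2).
  by move=> h; apply: hnc; exists e1, e2, e3; split; [exact: wiso_refl | left].
have nsq13 : ~ is_nz_square (e1 - e3).
  by move=> h; apply: hnc; exists e1, e2, e3; split; [exact: wiso_refl | do 5 right].
have [s [sG sx sy]] := cubic_halving_conj d12 d13 nsq12 nsq13 hP ynz P2.
by exists s; split => //=; rewrite sx sy rmorph0 mul0r !subr0.
Qed.

Lemma legendre_cond3 E : legendre_curve E -> cond3 iota E.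
Proof. by move=> [l [l0 l1 hiso]]; apply: (cond3_wiso hiso (cond3_legendre l0 l1)). Qed.

Lemma cond3_legendre_curve E : elliptic E -> cond3 iota E -> legendre_curve E.
Proof.
move=> hE h3; have hiso := wiso_short two_neq0 E; apply: (square_model_legendre hE).
have [a [b [c [hiso' hsq]]]] := @cond3_short_square_model (wshort E) erefl erefl
  (elliptic_wiso hiso hE) (cond3_wiso (wiso_sym hiso) h3).
by exists a, b, c; split => //; exact: (wiso_trans hiso hiso').
Qed.

End LegendreCriterion.

Theorem mainTheorem4 (K L : fieldType) (iota : {rmorphism K -> L}) (E : wcoef K) :
  (2 : K) != 0 -> is_sep_closure iota -> elliptic E ->
  (legendre_curve E <-> cubic_square_model E) /\
  (legendre_curve E <-> cond3 iota E).
Proof.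
move=> two_neq0 Hsep hE; split; split.
- exact: legendre_square_model.
- exact: square_model_legendre.
- exact: legendre_cond3.
- exact: cond3_legendre_curve.
Qed.
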